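(* Let $q>0$ and let $D^*>0$ be the unique positive root of $q-D(F_q+G_q)'(D)/(F_q+G_q)(D)=0$. Then $D^*\ge\sqrt{\max((q-1)/2,0)}$.
   Context: $F_q(y):=\int_0^\infty u^{q-1}e^{yu-u^2/2}\,\mathrm{d}u$ and $G_q(y):=F_q(-y)$ for $y\in\mathbb{R}$. It is known that such a unique positive root $D^*$ exists. Moreover, $\frac{\partial}{\partial D}\frac{D^q}{(F_q+G_q)(D)}>0$ if and only if $D<D^*$, for $D>0$. *)

From Stdlib Require Import Reals.
From Coquelicot Require Import Coquelicot.
Open Scope R_scope.

(* F_q(y) = \int_0^\infty u^(q-1) e^(y u - u^2/2) du, as an improper (generalized
   Riemann) integral from 0^+ to +oo (the integrand may be singular at 0 when q < 1). *)
Definition Fq (q y : R) : R :=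
  RInt_gen (fun u => Rpower u (q - 1) * exp (y * u - u ^ 2 / 2))
           (at_right 0) (Rbar_locally p_infty).

Definition Gq (q y : R) : R := Fq q (- y).

Definition FGq (q : R) (y : R) : R := Fq q y + Gq q y.

Definition is_root_eq (q D : R) : Prop :=
  q - D * Derive (FGq q) D / FGq q D = 0.

From Stdlib Require Import Reals Lra Psatz Classical.
From Coquelicot Require Import Coquelicot.
Open Scope R_scope.

(* With [M_a(y) = int_0^oo u^a e^(yu - u^2/2) du], put [A = M_(q-1)(D) + M_(q-1)(-D) = (F_q + G_q)(D)],
   [B = M_q(D) - M_q(-D) = (F_q + G_q)'(D)] and [C = M_(q+1)(D) + M_(q+1)(-D)].  Integration by
   parts gives [M_(q+1)(y) = q M_(q-1)(y) + y M_q(y)], so [C = q A + D B]; at a root, [q A = D B],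
   hence [B = (q/D) A] and [C = 2 q A].  The quadratic [l^2 A - 2 l B + C] is the integral of
   [u^(q-1) e^(-u^2/2) ((l - u)^2 e^(Du) + (l + u)^2 e^(-Du)) >= 0]; at [l = q/D] it equals
   [A (2q - q^2/D^2)], whence [D^2 >= q/2 >= (q - 1)/2]. *)

Local Notation is_RInt_0oo f l := (is_RInt_gen f (at_right 0) (Rbar_locally p_infty) l).

Lemma ball_R_between (x r y : R) : ball x r y -> x - r < y < x + r.
Proof. intros H. apply Rabs_lt_between'. exact H. Qed.

Lemma eventually_0_lt_le :
  filter_prod (at_right 0) (Rbar_locally p_infty) (fun ab => 0 < fst ab <= snd ab).
Proof.
  apply Filter_prod with (fun a => 0 < a < 1) (fun b => 1 < b).
  - exists (mkposreal 1 Rlt_0_1). intros y Hy Hy0. apply ball_R_between in Hy. simpl in Hy. lra.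
  - exists 1. auto.
  - intros a b Ha Hb. simpl. lra.
Qed.

Lemma is_RInt_0oo_ext (f g : R -> R) (l : R) :
  (forall u, 0 < u -> f u = g u) -> is_RInt_0oo f l -> is_RInt_0oo g l.
Proof.
  intros Hfg. apply is_RInt_gen_ext.
  eapply filter_imp; [|exact eventually_0_lt_le]. intros [a b] [Ha Hab] x [Hx _]. simpl in *.
  apply Hfg. rewrite Rmin_left in Hx by lra. lra.
Qed.

Lemma is_RInt_0oo_lincomb (f g : R -> R) (lf lg al be : R) :
  is_RInt_0oo f lf -> is_RInt_0oo g lg ->
  is_RInt_0oo (fun u => al * f u + be * g u) (al * lf + be * lg).
Proof.
  intros Hf Hg. exact (is_RInt_gen_plus _ _ _ _ (is_RInt_gen_scal f al lf Hf) (is_RInt_gen_scal g be lg Hg)).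
Qed.

Lemma is_RInt_0oo_abs_le (f g : R -> R) (lf lg : R) :
  (forall u, 0 < u -> Rabs (f u) <= g u) ->
  is_RInt_0oo f lf -> is_RInt_0oo g lg -> Rabs lf <= lg.
Proof.
  intros Hfg. apply (RInt_gen_norm (V:=R_CompleteNormedModule)).
  - eapply filter_imp; [|exact eventually_0_lt_le]. intros ab H. apply H.
  - eapply filter_imp; [|exact eventually_0_lt_le]. intros ab [Ha _] x [Hx _].
    apply Hfg. lra.
Qed.

Lemma is_RInt_0oo_ge_0 (g : R -> R) (l : R) :
  (forall u, 0 < u -> 0 <= g u) -> is_RInt_0oo g l -> 0 <= l.
Proof.
  intros Hg Hl. assert (H : Rabs l <= l).
  { apply (is_RInt_0oo_abs_le g g); auto. intros u Hu. rewrite Rabs_right; [lra | apply Rle_ge; auto]. }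
  pose proof (Rle_abs (- l)). rewrite Rabs_Ropp in *. lra.
Qed.

Lemma is_RInt_0oo_unique (f : R -> R) (l1 l2 : R) :
  is_RInt_0oo f l1 -> is_RInt_0oo f l2 -> l1 = l2.
Proof.
  intros H1 H2. rewrite <- (is_RInt_gen_unique (V:=R_CompleteNormedModule) _ _ H1).
  exact (is_RInt_gen_unique (V:=R_CompleteNormedModule) _ _ H2).
Qed.

Section PositiveHalfLine.

Variable f : R -> R.
Hypothesis f_cont : forall u, 0 < u -> continuous f u.
Hypothesis f_ge_0 : forall u, 0 < u -> 0 <= f u.

Lemma ex_RInt_pos (a b : R) : 0 < a -> 0 < b -> ex_RInt f a b.
Proof.
  intros Ha Hb. apply (ex_RInt_continuous (V:=R_CompleteNormedModule)). intros z [Hz _].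
  apply f_cont. eapply Rlt_le_trans; [|exact Hz]. now apply Rmin_case.
Qed.

Lemma RInt_pos_ge_0 (a b : R) : 0 < a -> a <= b -> 0 <= RInt f a b.
Proof. intros. apply RInt_ge_0; auto. apply ex_RInt_pos; lra. intros; apply f_ge_0; lra. Qed.

Lemma RInt_pos_le_inner (a a0 b0 b : R) : 0 < a -> a <= a0 -> a0 <= b0 -> b0 <= b ->
  RInt f a0 b0 <= RInt f a b.
Proof.
  intros. rewrite <- (RInt_Chasles f a a0 b), <- (RInt_Chasles f a0 b0 b)
    by (apply ex_RInt_pos; lra).
  pose proof (RInt_pos_ge_0 a a0). pose proof (RInt_pos_ge_0 b0 b).
  unfold plus; simpl. lra.
Qed.

(* The improper integral is the supremum of the integrals over compact subintervals. *)
Lemma ex_RInt_0oo_bounded (M : R) :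
  (forall a b, 0 < a -> a < b -> RInt f a b <= M) ->
  ex_RInt_gen f (at_right 0) (Rbar_locally p_infty).
Proof.
  intros HM.
  set (S := fun x => exists a b, 0 < a /\ a < b /\ x = RInt f a b).
  assert (S_bound : bound S) by (exists M; intros x (a & b & Ha & Hab & ->); auto).
  assert (S_inhabited : exists x, S x) by (exists (RInt f 1 2), 1, 2; repeat split; lra).
  destruct (completeness S S_bound S_inhabited) as [L [L_ub L_lub]].
  exists L. intros P [eps HP].
  assert (near_sup : exists a0 b0, 0 < a0 /\ a0 < b0 /\ L - eps < RInt f a0 b0).
  { apply NNPP. intros Hn. cut (L <= L - eps); [destruct eps; simpl; lra |].
    apply L_lub. intros x (a & b & Ha & Hab & ->). apply Rnot_lt_le. intros Hlt.
    apply Hn. exists a, b. auto. }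
  destruct near_sup as (a0 & b0 & Ha0 & Hab0 & Hlt).
  apply Filter_prod with (fun a => 0 < a < a0) (fun b => b0 < b).
  - exists (mkposreal a0 Ha0). intros y Hy Hy0. apply ball_R_between in Hy. simpl in Hy. lra.
  - exists b0. auto.
  - intros a b Ha Hb. exists (RInt f a b). split.
    + apply (RInt_correct (V:=R_CompleteNormedModule)). apply ex_RInt_pos; lra.
    + apply HP. apply Rabs_lt_between'.
      pose proof (RInt_pos_le_inner a a0 b0 b).
      assert (RInt f a b <= L) by (apply L_ub; exists a, b; repeat split; lra).
      destruct eps as [e He]; simpl in *. lra.
Qed.

End PositiveHalfLine.

Lemma exp_le_compat (a b : R) : a <= b -> exp a <= exp b.
Proof. intros [H | ->]; [left; now apply exp_increasing | right; reflexivity]. Qed.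

Lemma Rpower_plus_1 (a u : R) : 0 < u -> Rpower u (a + 1) = Rpower u a * u.
Proof. intros Hu. now rewrite Rpower_plus, Rpower_1. Qed.

Lemma Rpower_plus_2 (a u : R) : 0 < u -> Rpower u (a + 2) = Rpower u a * u ^ 2.
Proof. intros Hu. rewrite Rpower_plus, <- Rpower_pow by exact Hu. simpl; do 2 f_equal; ring. Qed.

Lemma Rpower_minus_1 (a u : R) : 0 < u -> Rpower u a = Rpower u (a - 1) * u.
Proof. intros Hu. rewrite <- Rpower_plus_1 by exact Hu. f_equal; ring. Qed.

Lemma is_derive_Rpower (a u : R) : 0 < u -> is_derive (fun x => Rpower x a) u (a * Rpower u (a - 1)).
Proof. intros Hu. apply is_derive_Reals. now apply derivable_pt_lim_power. Qed.

Definition gauss_weight (a y u : R) : R := Rpower u a * exp (y * u - u ^ 2 / 2).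

Lemma gauss_weight_pos (a y u : R) : 0 < gauss_weight a y u.
Proof. apply Rmult_lt_0_compat; apply exp_pos. Qed.

Lemma is_derive_gauss_weight (a y u : R) : 0 < u ->
  is_derive (gauss_weight a y) u
    (a * gauss_weight (a - 1) y u + y * gauss_weight a y u - gauss_weight (a + 1) y u).
Proof.
  intros Hu.
  assert (Hexp : is_derive (fun x => exp (y * x - x ^ 2 / 2)) u
                   ((y - u) * exp (y * u - u ^ 2 / 2))).
  { auto_derive; [exact I |].
    replace (y * u + - (u * (u * 1) * / 2)) with (y * u - u ^ 2 / 2) by field. field. }
  pose proof (is_derive_mult _ _ u _ _ (is_derive_Rpower a u Hu) Hexp (fun _ _ => Rmult_comm _ _)) as H.
  replace (a * gauss_weight (a - 1) y u + y * gauss_weight a y u - gauss_weight (a + 1) y u)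
    with (a * Rpower u (a - 1) * exp (y * u - u ^ 2 / 2) + Rpower u a * ((y - u) * exp (y * u - u ^ 2 / 2))).
  - exact H.
  - unfold gauss_weight. rewrite Rpower_plus_1, (Rpower_minus_1 a) by exact Hu. ring.
Qed.

Lemma ex_derive_gauss_weight (a y u : R) : 0 < u -> ex_derive (gauss_weight a y) u.
Proof. intros Hu. eexists. now apply is_derive_gauss_weight. Qed.

Lemma continuous_gauss_weight (a y u : R) : 0 < u -> continuous (gauss_weight a y) u.
Proof. intros Hu. now apply (ex_derive_continuous (V:=R_NormedModule)), ex_derive_gauss_weight. Qed.

Lemma gauss_weight_le_near_0 (a y u : R) : 0 < u <= 1 ->
  gauss_weight a y u <= exp (Rabs y) * Rpower u a.
Proof.
  intros Hu. unfold gauss_weight. rewrite Rmult_comm. apply Rmult_le_compat_r.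
  - left; apply exp_pos.
  - apply exp_le_compat. pose proof (Rle_abs y). pose proof (Rabs_pos y). nra.
Qed.

(* Completing the square: [(|a| + |y|) u - u^2/2 <= (|a| + |y| + 1)^2/2 - u]. *)
Lemma gauss_weight_le_exp_opp (a y u : R) : 1 <= u ->
  gauss_weight a y u <= exp ((Rabs a + Rabs y + 1) ^ 2 / 2) * exp (- u).
Proof.
  intros Hu. unfold gauss_weight, Rpower. rewrite <- !exp_plus. apply exp_le_compat.
  assert (0 <= ln u) by (rewrite <- ln_1; apply ln_le; lra).
  assert (ln u <= u) by (pose proof (exp_ineq1_le (ln u)); rewrite exp_ln in * by lra; lra).
  pose proof (Rle_abs a). pose proof (Rle_abs y). pose proof (Rabs_pos a).
  pose proof (pow2_ge_0 (u - (Rabs a + Rabs y + 1))).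
  nra.
Qed.

Lemma is_RInt_Rpower (a s : R) : -1 < a -> 0 < s <= 1 ->
  is_RInt (fun u => Rpower u a) s 1 ((1 - Rpower s (a + 1)) / (a + 1)).
Proof.
  intros Ha Hs.
  set (F u := / (a + 1) * Rpower u (a + 1)).
  replace ((1 - Rpower s (a + 1)) / (a + 1)) with (minus (F 1) (F s)).
  2:{ unfold F, minus, plus, opp, Rpower; simpl. rewrite ln_1, Rmult_0_r, exp_0. field. lra. }
  apply (is_RInt_derive (V:=R_CompleteNormedModule) F); intros x Hx;
    rewrite Rmin_left, Rmax_right in Hx by lra.
  - replace (Rpower x a) with (/ (a + 1) * ((a + 1) * Rpower x (a + 1 - 1)))
      by (replace (a + 1 - 1) with a by ring; field; lra).
    apply is_derive_scal, is_derive_Rpower. lra.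
  - apply (ex_derive_continuous (V:=R_NormedModule)). eexists. apply is_derive_Rpower. lra.
Qed.

Lemma is_RInt_exp_opp (t : R) : is_RInt (fun u => exp (- u)) 1 t (exp (- 1) - exp (- t)).
Proof.
  replace (exp (- 1) - exp (- t)) with (minus ((fun u => - exp (- u)) t) ((fun u => - exp (- u)) 1))
    by (unfold minus, plus, opp; simpl; change (- (1)) with (-1); ring).
  apply (is_RInt_derive (V:=R_CompleteNormedModule) (fun u => - exp (- u))); intros x _.
  - auto_derive; [exact I | ring].
  - apply (ex_derive_continuous (V:=R_NormedModule)). auto_derive. exact I.
Qed.

Lemma RInt_gauss_weight_le (a y s t : R) : -1 < a -> 0 < s -> s < t ->
  RInt (gauss_weight a y) s t <= exp (Rabs y) / (a + 1) + exp ((Rabs a + Rabs y + 1) ^ 2 / 2).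
Proof.
  intros Ha Hs Hst.
  set (w := gauss_weight a y). set (K := exp ((Rabs a + Rabs y + 1) ^ 2 / 2)).
  assert (w_cont : forall u, 0 < u -> continuous w u) by (intros; now apply continuous_gauss_weight).
  assert (w_ge_0 : forall u, 0 < u -> 0 <= w u) by (intros; left; apply gauss_weight_pos).
  set (s' := Rmin s 1). set (t' := Rmax t 1).
  assert (0 < s' <= s /\ s' <= 1)
    by (unfold s'; repeat split; [apply Rmin_case | apply Rmin_l | apply Rmin_r]; lra).
  assert (t <= t' /\ 1 <= t') by (unfold t'; split; [apply Rmax_l | apply Rmax_r]).
  assert (near_0 : RInt w s' 1 <= exp (Rabs y) / (a + 1)).
  { pose proof (is_RInt_Rpower a s' Ha ltac:(lra)) as HI.
    apply Rle_trans with (RInt (fun u => exp (Rabs y) * Rpower u a) s' 1).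
    - apply RInt_le; [lra | apply (ex_RInt_pos w); auto; lra |
        eexists; exact (is_RInt_scal _ _ _ (exp (Rabs y)) _ HI) |].
      intros x Hx. apply gauss_weight_le_near_0. lra.
    - rewrite (is_RInt_unique (fun u => exp (Rabs y) * Rpower u a) _ _ _ (is_RInt_scal _ _ _ _ _ HI)).
      assert (0 < Rpower s' (a + 1)) by apply exp_pos. pose proof (exp_pos (Rabs y)).
      unfold scal; simpl; unfold mult; simpl. unfold Rdiv.
      rewrite <- Rmult_assoc. apply Rmult_le_compat_r; [left; apply Rinv_0_lt_compat; lra | nra]. }
  assert (near_oo : RInt w 1 t' <= K).
  { pose proof (is_RInt_exp_opp t') as HI.
    apply Rle_trans with (RInt (fun u => K * exp (- u)) 1 t').
    - apply RInt_le; [lra | apply (ex_RInt_pos w); auto; lra | eexists; exact (is_RInt_scal _ _ _ K _ HI) |].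
      intros x Hx. apply gauss_weight_le_exp_opp. lra.
    - rewrite (is_RInt_unique (fun u => K * exp (- u)) _ _ _ (is_RInt_scal _ _ _ _ _ HI)).
      pose proof (exp_pos (- t')). assert (0 < K) by apply exp_pos.
      assert (exp (- 1) <= 1) by (rewrite <- exp_0; apply exp_le_compat; lra).
      unfold scal; simpl; unfold mult; simpl. nra. }
  pose proof (RInt_pos_le_inner w w_cont w_ge_0 s' s t t').
  rewrite <- (RInt_Chasles w s' 1 t') in * by (apply (ex_RInt_pos w); auto; lra).
  unfold plus in *; simpl in *. lra.
Qed.

Definition moment (a y : R) : R := RInt_gen (gauss_weight a y) (at_right 0) (Rbar_locally p_infty).

Lemma is_RInt_moment (a y : R) : -1 < a -> is_RInt_0oo (gauss_weight a y) (moment a y).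
Proof.
  intros Ha. apply (RInt_gen_correct (V:=R_CompleteNormedModule)).
  apply (ex_RInt_0oo_bounded _ (continuous_gauss_weight a y) (fun u _ => Rlt_le _ _ (gauss_weight_pos a y u))
           _ (fun s t Hs Hst => RInt_gauss_weight_le a y s t Ha Hs Hst)).
Qed.

Lemma exp_sub_1_sub_le (x : R) : 0 <= exp x - 1 - x <= x ^ 2 * exp (Rabs x).
Proof.
  pose proof (exp_ineq1_le x). pose proof (exp_ineq1_le (- x)).
  assert (exp x * exp (- x) = 1) by (rewrite <- exp_plus, Rplus_opp_r; apply exp_0).
  pose proof (exp_pos x). pose proof (exp_pos (- x)).
  split; [lra |].
  destruct (Rle_lt_dec 0 x).
  - rewrite Rabs_right by lra. nra.
  - rewrite Rabs_left by lra. assert (1 <= exp (- x)) by (rewrite <- exp_0; apply exp_le_compat; lra). nra.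
Qed.

Lemma gauss_weight_taylor (a y h u : R) : 0 < u -> Rabs h <= 1 ->
  Rabs (gauss_weight a (y + h) u - gauss_weight a y u - h * gauss_weight (a + 1) y u)
    <= h ^ 2 * gauss_weight (a + 2) (y + 1) u.
Proof.
  intros Hu Hh. unfold gauss_weight. rewrite Rpower_plus_1, Rpower_plus_2 by exact Hu.
  replace ((y + h) * u - u ^ 2 / 2) with ((y * u - u ^ 2 / 2) + h * u) by ring.
  replace ((y + 1) * u - u ^ 2 / 2) with ((y * u - u ^ 2 / 2) + u) by ring.
  rewrite !exp_plus.
  set (P := Rpower u a). set (G := exp (y * u - u ^ 2 / 2)).
  assert (0 < P * G) by (apply Rmult_lt_0_compat; apply exp_pos).
  destruct (exp_sub_1_sub_le (h * u)) as [T1 T2].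
  assert (exp (Rabs (h * u)) <= exp u).
  { apply exp_le_compat. rewrite Rabs_mult, (Rabs_right u) by lra. nra. }
  replace (P * (G * exp (h * u)) - P * G - h * (P * u * G)) with (P * G * (exp (h * u) - 1 - h * u)) by ring.
  rewrite Rabs_mult, Rabs_right, Rabs_right by lra.
  apply Rle_trans with (P * G * ((h * u) ^ 2 * exp u)).
  - apply Rmult_le_compat_l; [lra |]. pose proof (pow2_ge_0 (h * u)). nra.
  - right. ring.
Qed.

Lemma moment_taylor (a y h : R) : -1 < a -> Rabs h <= 1 ->
  Rabs (moment a (y + h) - moment a y - h * moment (a + 1) y) <= h ^ 2 * moment (a + 2) (y + 1).
Proof.
  intros Ha Hh.
  pose proof (is_RInt_0oo_lincomb _ _ _ _ 1 (-1) (is_RInt_moment a (y + h) Ha) (is_RInt_moment a y Ha)) as H1.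
  pose proof (is_RInt_0oo_lincomb _ _ _ _ 1 (- h) H1 (is_RInt_moment (a + 1) y ltac:(lra))) as H2.
  pose proof (is_RInt_moment (a + 2) (y + 1) ltac:(lra)) as H3.
  apply (is_RInt_gen_scal _ (h ^ 2)) in H3.
  replace (moment a (y + h) - moment a y - h * moment (a + 1) y)
    with (1 * (1 * moment a (y + h) + -1 * moment a y) + - h * moment (a + 1) y) by ring.
  refine (is_RInt_0oo_abs_le _ _ _ _ _ H2 H3). intros u Hu. cbv beta.
  replace (1 * (1 * gauss_weight a (y + h) u + -1 * gauss_weight a y u) + - h * gauss_weight (a + 1) y u)
    with (gauss_weight a (y + h) u - gauss_weight a y u - h * gauss_weight (a + 1) y u) by ring.
  now apply gauss_weight_taylor.
Qed.

Lemma is_derive_moment (a y : R) : -1 < a -> is_derive (moment a) y (moment (a + 1) y).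
Proof.
  intros Ha. apply is_derive_Reals. intros eps Heps.
  set (C := moment (a + 2) (y + 1)).
  assert (HC : 0 <= C).
  { apply (is_RInt_0oo_ge_0 (gauss_weight (a + 2) (y + 1))).
    - intros; left; apply gauss_weight_pos.
    - apply is_RInt_moment; lra. }
  assert (Hdelta : 0 < Rmin 1 (eps / (C + 1))) by (apply Rmin_case; [lra | apply Rdiv_lt_0_compat; lra]).
  exists (mkposreal _ Hdelta). intros h Hh0 Hh. simpl in Hh.
  assert (Rabs h <= 1) by (left; eapply Rlt_le_trans; [exact Hh | apply Rmin_l]).
  assert (Hh_eps : Rabs h * (C + 1) < eps).
  { apply (Rmult_lt_compat_r (C + 1)) in Hh; [| lra]. eapply Rlt_le_trans; [exact Hh |].
    apply Rle_trans with (eps / (C + 1) * (C + 1)); [apply Rmult_le_compat_r, Rmin_r; lra | right; field; lra]. }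
  pose proof (moment_taylor a y h Ha ltac:(assumption)) as T. fold C in T.
  assert (0 < Rabs h) by (apply Rabs_pos_lt; exact Hh0).
  replace ((moment a (y + h) - moment a y) / h - moment (a + 1) y)
    with ((moment a (y + h) - moment a y - h * moment (a + 1) y) / h) by (field; exact Hh0).
  rewrite Rabs_div by exact Hh0.
  apply Rle_lt_trans with (Rabs h * C).
  - apply Rle_div_l; [lra |]. rewrite <- pow2_abs in T. lra.
  - nra.
Qed.

Definition moment_even (a y : R) : R := moment a y + moment a (- y).
Definition moment_odd (a y : R) : R := moment a y - moment a (- y).

Lemma FGq_moment_even (q y : R) : FGq q y = moment_even (q - 1) y.
Proof. reflexivity. Qed.

Lemma Derive_FGq (q y : R) : 0 < q -> Derive (FGq q) y = moment_odd q y.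
Proof.
  intros Hq. apply is_derive_unique.
  assert (Hd : forall z, is_derive (moment (q - 1)) z (moment q z)).
  { intros z. replace (moment q z) with (moment (q - 1 + 1) z) by (f_equal; ring).
    apply is_derive_moment. lra. }
  apply (is_derive_ext (moment_even (q - 1))); [intros; symmetry; apply FGq_moment_even |].
  unfold moment_odd. replace (moment q y - moment q (- y)) with (moment q y + -1 * moment q (- y)) by ring.
  apply (is_derive_plus _ (fun z => moment (q - 1) (- z))); [apply Hd |].
  apply (is_derive_comp (moment (q - 1)) Ropp); [apply Hd |].
  apply (is_derive_ext (fun z => - z)); [reflexivity | auto_derive; [exact I | ring]].
Qed.

Lemma gauss_weight_lim_0 (a y : R) : 0 < a -> filterlim (gauss_weight a y) (at_right 0) (locally 0).
Proof.
  intros Ha. apply filterlim_locally. intros eps.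
  set (c := exp (Rabs y)). assert (Hc : 0 < c) by apply exp_pos.
  set (d := Rpower (eps / c) (/ a)).
  assert (Hd : 0 < Rmin 1 d) by (apply Rmin_case; [lra | apply exp_pos]).
  exists (mkposreal _ Hd). intros u Hu Hu0. apply ball_R_between in Hu. simpl in Hu.
  pose proof (Rmin_l 1 d). pose proof (Rmin_r 1 d).
  apply Rabs_lt_between'. pose proof (gauss_weight_pos a y u).
  assert (Hpow : Rpower u a < eps / c).
  { replace (eps / c) with (Rpower d a).
    - apply Rlt_Rpower_l; lra.
    - unfold d. rewrite Rpower_mult, Rinv_l, Rpower_1 by (try apply Rdiv_lt_0_compat; try apply cond_pos; lra).
      reflexivity. }
  pose proof (gauss_weight_le_near_0 a y u ltac:(lra)).
  apply (Rmult_lt_compat_l c) in Hpow; [| exact Hc].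
  replace (c * (eps / c)) with (pos eps) in Hpow by (field; lra).
  unfold c in Hpow. lra.
Qed.

Lemma gauss_weight_lim_oo (a y : R) : filterlim (gauss_weight a y) (Rbar_locally p_infty) (locally 0).
Proof.
  apply filterlim_locally. intros eps.
  set (K := exp ((Rabs a + Rabs y + 1) ^ 2 / 2)). assert (HK : 0 < K) by apply exp_pos.
  exists (Rmax 1 (- ln (eps / K))). intros u Hu.
  pose proof (Rmax_l 1 (- ln (eps / K))). pose proof (Rmax_r 1 (- ln (eps / K))).
  apply Rabs_lt_between'. pose proof (gauss_weight_pos a y u).
  pose proof (gauss_weight_le_exp_opp a y u ltac:(lra)).
  assert (Hexp : exp (- u) < eps / K).
  { rewrite <- (exp_ln (eps / K)) by (apply Rdiv_lt_0_compat; [apply cond_pos | exact HK]).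
    apply exp_increasing. lra. }
  apply (Rmult_lt_compat_l K) in Hexp; [| exact HK].
  replace (K * (eps / K)) with (pos eps) in Hexp by (field; lra).
  unfold K in Hexp. lra.
Qed.

(* Integration by parts of [d/du gauss_weight q y]; the boundary terms vanish since [q > 0]. *)
Lemma moment_recurrence (q y : R) : 0 < q ->
  moment (q + 1) y = q * moment (q - 1) y + y * moment q y.
Proof.
  intros Hq.
  set (dw u := q * gauss_weight (q - 1) y u + y * gauss_weight q y u - gauss_weight (q + 1) y u).
  assert (H0 : is_RInt_0oo dw (0 - 0)).
  { apply (is_RInt_0oo_ext (Derive (gauss_weight q y)));
      [intros; now apply is_derive_unique, is_derive_gauss_weight |].
    apply is_RInt_gen_Derive.
    - eapply filter_imp; [| exact eventually_0_lt_le]. intros [a b] [Ha Hab] x [Hx _]. simpl in *.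
      rewrite Rmin_left in Hx by lra. apply ex_derive_gauss_weight. lra.
    - eapply filter_imp; [| exact eventually_0_lt_le]. intros [a b] [Ha Hab] x [Hx _]. simpl in *.
      rewrite Rmin_left in Hx by lra.
      apply (continuous_ext_loc _ dw).
      + exists (mkposreal x ltac:(lra)). intros t Ht. apply ball_R_between in Ht. simpl in Ht.
        symmetry. apply is_derive_unique, is_derive_gauss_weight. lra.
      + unfold dw. apply (ex_derive_continuous (V:=R_NormedModule)).
        assert (0 < x) by lra.
        apply (ex_derive_minus (fun u => q * gauss_weight (q - 1) y u + y * gauss_weight q y u));
          [apply (ex_derive_plus (fun u => q * gauss_weight (q - 1) y u)); apply ex_derive_scal |];
          now apply ex_derive_gauss_weight.
    - now apply gauss_weight_lim_0.
    - apply gauss_weight_lim_oo. }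
  pose proof (is_RInt_0oo_lincomb _ _ _ _ q y (is_RInt_moment (q - 1) y ltac:(lra))
                (is_RInt_moment q y ltac:(lra))) as H1.
  pose proof (is_RInt_0oo_lincomb _ _ _ _ 1 (-1) H1 (is_RInt_moment (q + 1) y ltac:(lra))) as H2.
  apply (is_RInt_0oo_ext _ dw) in H2; [| intros; unfold dw; ring].
  pose proof (is_RInt_0oo_unique _ _ _ H0 H2). lra.
Qed.

Lemma is_RInt_moment_even (a y : R) : -1 < a ->
  is_RInt_0oo (fun u => gauss_weight a y u + gauss_weight a (- y) u) (moment_even a y).
Proof.
  intros Ha. exact (is_RInt_gen_plus _ _ _ _ (is_RInt_moment a y Ha) (is_RInt_moment a (- y) Ha)).
Qed.

Lemma is_RInt_moment_odd (a y : R) : -1 < a ->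
  is_RInt_0oo (fun u => gauss_weight a y u - gauss_weight a (- y) u) (moment_odd a y).
Proof.
  intros Ha. exact (is_RInt_gen_minus _ _ _ _ (is_RInt_moment a y Ha) (is_RInt_moment a (- y) Ha)).
Qed.

Lemma moment_even_ge_0 (a y : R) : -1 < a -> 0 <= moment_even a y.
Proof.
  intros Ha. refine (is_RInt_0oo_ge_0 _ _ _ (is_RInt_moment_even a y Ha)). intros u _.
  pose proof (gauss_weight_pos a y u). pose proof (gauss_weight_pos a (- y) u). lra.
Qed.

Lemma moment_even_recurrence (q y : R) : 0 < q ->
  moment_even (q + 1) y = q * moment_even (q - 1) y + y * moment_odd q y.
Proof.
  intros Hq. unfold moment_even, moment_odd. rewrite !moment_recurrence by exact Hq. ring.
Qed.

Lemma moment_quadratic_ge_0 (a y l : R) : -1 < a ->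
  0 <= l ^ 2 * moment_even a y - 2 * l * moment_odd (a + 1) y + moment_even (a + 2) y.
Proof.
  intros Ha.
  pose proof (is_RInt_0oo_lincomb _ _ _ _ (l ^ 2) (- 2 * l) (is_RInt_moment_even a y Ha)
                (is_RInt_moment_odd (a + 1) y ltac:(lra))) as H.
  pose proof (is_RInt_0oo_lincomb _ _ _ _ 1 1 H (is_RInt_moment_even (a + 2) y ltac:(lra))) as H'.
  replace (l ^ 2 * moment_even a y - 2 * l * moment_odd (a + 1) y + moment_even (a + 2) y)
    with (1 * (l ^ 2 * moment_even a y + - 2 * l * moment_odd (a + 1) y) + 1 * moment_even (a + 2) y) by ring.
  refine (is_RInt_0oo_ge_0 _ _ _ H'). intros u Hu. cbv beta.
  pose proof (gauss_weight_pos a y u). pose proof (gauss_weight_pos a (- y) u).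
  unfold gauss_weight in *. rewrite !Rpower_plus_1, !Rpower_plus_2 by exact Hu.
  replace (1 * (l ^ 2 * (Rpower u a * exp (y * u - u ^ 2 / 2) + Rpower u a * exp (- y * u - u ^ 2 / 2)) +
     - 2 * l * (Rpower u a * u * exp (y * u - u ^ 2 / 2) - Rpower u a * u * exp (- y * u - u ^ 2 / 2))) +
     1 * (Rpower u a * u ^ 2 * exp (y * u - u ^ 2 / 2) + Rpower u a * u ^ 2 * exp (- y * u - u ^ 2 / 2)))
    with ((l - u) ^ 2 * (Rpower u a * exp (y * u - u ^ 2 / 2))
          + (l + u) ^ 2 * (Rpower u a * exp (- y * u - u ^ 2 / 2)))
    by ring.
  pose proof (pow2_ge_0 (l - u)). pose proof (pow2_ge_0 (l + u)). nra.
Qed.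

Lemma is_root_eq_sqr_ge (q D : R) : 0 < q -> 0 < D -> is_root_eq q D -> q / 2 <= D ^ 2.
Proof.
  intros Hq HD Hroot. unfold is_root_eq in Hroot.
  rewrite Derive_FGq, FGq_moment_even in Hroot by exact Hq.
  set (A := moment_even (q - 1) D) in *. set (B := moment_odd q D) in *.
  (* [A = 0] is excluded because [x / 0 = 0] would turn the root equation into [q = 0]. *)
  assert (HA : 0 < A).
  { destruct (moment_even_ge_0 (q - 1) D ltac:(lra)) as [Hpos | Hzero]; [exact Hpos |].
    fold A in Hzero. rewrite <- Hzero in Hroot. unfold Rdiv in Hroot. rewrite Rinv_0, Rmult_0_r in Hroot. lra. }
  assert (HB : B = q / D * A).
  { apply (Rmult_eq_compat_r A) in Hroot.
    replace ((q - D * B / A) * A) with (q * A - D * B) in Hroot by (field; lra).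
    replace B with (D * B / D) by (field; lra). replace (D * B) with (q * A) by lra. field. lra. }
  assert (HC : moment_even (q + 1) D = 2 * q * A).
  { rewrite moment_even_recurrence by exact Hq. fold A B. rewrite HB. field. lra. }
  pose proof (moment_quadratic_ge_0 (q - 1) D (q / D) ltac:(lra)) as Hquad.
  replace (q - 1 + 1) with q in Hquad by ring. replace (q - 1 + 2) with (q + 1) in Hquad by ring.
  fold A B in Hquad. rewrite HB, HC in Hquad.
  replace ((q / D) ^ 2 * A - 2 * (q / D) * (q / D * A) + 2 * q * A) with (A * q * (2 * D ^ 2 - q) / D ^ 2) in Hquad
    by (field; lra).
  assert (0 <= A * q * (2 * D ^ 2 - q)).
  { apply Rmult_le_reg_r with (/ D ^ 2); [apply Rinv_0_lt_compat; nra |]. lra. }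
  assert (0 < A * q) by nra. nra.
Qed.

Theorem lemma2p3 (q Dstar : R) (hq : 0 < q) (hD : 0 < Dstar)
  (hroot : is_root_eq q Dstar)
  (huniq : forall D : R, 0 < D -> is_root_eq q D -> D = Dstar) :
  sqrt (Rmax ((q - 1) / 2) 0) <= Dstar.
Proof.
  (* Every positive root satisfies the bound. *)
  pose proof (is_root_eq_sqr_ge q Dstar hq hD hroot).
  rewrite <- (sqrt_pow2 Dstar) by lra.
  apply sqrt_le_1_alt, Rmax_lub; lra.
Qed.
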